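(* Under the uniform random scheduler, the expected running time of Protocol 1 (2-Slot protocol) on $n$ nodes, started with one node in $L_0$ and the others in $F$, until the leader's component spans all $n$ nodes is $O(\log n)$ parallel time (i.e. $O(n\log n)$ interactions).
   Context: Network constructor model: $n$ nodes, every pair may interact; each node pair has an edge state in $\{0,1\}$, initially $0$. At each step the uniform random scheduler picks an unordered pair of nodes uniformly at random among all $n(n-1)/2$ pairs, independently of the past, and updates the pair according to the transition rules (either ordering); unlisted triples are unchanged. Parallel time is the number of steps divided by $n$. Protocol 1 (2-Slot protocol): $Q=\{F,L_0,L_1,L_2,O_0,O_1,O_2\}$, rules $(L_0,F,0)\to(L_1,O_0,1)$, $(L_1,F,0)\to(L_2,O_0,1)$, $(O_0,F,0)\to(O_1,O_0,1)$, $(O_1,F,0)\to(O_2,O_0,1)$; the node moving from $F$ to $O_0$ becomes a child of the other node, and the leader's component is the set of nodes connected to the leader by active edges. *)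

From HB Require Import structures.
From mathcomp Require Import all_boot all_order all_algebra.
From mathcomp Require Import all_classical all_reals.
From mathcomp Require Import ereal sequences exp.
Set Implicit Arguments. Unset Strict Implicit. Unset Printing Implicit Defensive.
Import Order.TTheory GRing.Theory Num.Theory.

Inductive Q := F | L0 | L1 | L2 | O0 | O1 | O2.

Definition delta (a b : Q) (e : bool) : option (Q * Q * bool) :=
  match a, b, e with
  | L0, F, false => Some (L1, O0, true)
  | L1, F, false => Some (L2, O0, true)
  | O0, F, false => Some (O1, O0, true)
  | O1, F, false => Some (O2, O0, true)
  | _, _, _ => None
  end.

(* A configuration on n nodes: node states and (symmetric) edge states *)
Record config (n : nat) := Config {
  state : 'I_n -> Q;
  edge : 'I_n -> 'I_n -> bool }.

(* Scheduler choices: unordered pairs {u,v}, represented as u < v *)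
Definition pair_t (n : nat) := {p : 'I_n * 'I_n | p.1 < p.2}.

Definition apply_rule n (c : config n) (u v : 'I_n) (r : Q * Q * bool) : config n :=
  let: (a, b, e') := r in
  Config (fun x => if x == u then a else if x == v then b else state c x)
         (fun x y => if ((x == u) && (y == v)) || ((x == v) && (y == u))
                     then e' else edge c x y).

Definition step n (c : config n) (p : pair_t n) : config n :=
  let u := (val p).1 in let v := (val p).2 in
  match delta (state c u) (state c v) (edge c u v) with
  | Some r => apply_rule c u v r
  | None =>
    match delta (state c v) (state c u) (edge c u v) with
    | Some r => apply_rule c v u r
    | None => c
    end
  end.

Definition run n (c : config n) (s : seq (pair_t n)) : config n := foldl (@step n) c s.

Definition init n (l : 'I_n) : config n :=
  Config (fun x => if x == l then L0 else F) (fun _ _ => false).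

Definition spans n (l : 'I_n) (c : config n) : bool :=
  [forall v, connect (fun x y => edge c x y) l v].

(* Probability that the stopping time T exceeds t, i.e. that none of the
   configurations after 0,1,...,t interactions is spanning; the t scheduler
   choices are independent and uniform over the n(n-1)/2 unordered pairs. *)
Definition prob_T_gt (R : realType) n (l : 'I_n) (t : nat) : R :=
  (#|[set s : t.-tuple (pair_t n) |
       [forall k : 'I_t.+1, ~~ spans l (run (init l) (take k s))]]|)%:R
  / (#|{: pair_t n}| ^ t)%:R.

(* Expected number of interactions E[T] = sum_{t >= 0} P(T > t), in \bar R
   (equals +oo if T is infinite with positive probability). *)
Definition expected_time (R : realType) n (l : 'I_n) : \bar R :=
  \sum_(0 <= t <oo) ((prob_T_gt R l t)%:E).

From HB Require Import structures.
From mathcomp Require Import all_boot all_order all_algebra.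
From mathcomp Require Import all_classical all_reals.
From mathcomp Require Import ereal sequences exp.
From mathcomp Require Import normedtype.
From mathcomp Require Import zify ring lra.
Import Order.TTheory GRing.Theory Num.Theory.
Set Implicit Arguments. Unset Strict Implicit. Unset Printing Implicit Defensive.

(* Call a node recruited when it is not in state F.  Every rule lets a
   recruited node u with a free slot (L0, O0: two slots; L1, O1: one) recruit a
   free node v, linking them by an edge.  Hence every reachable configuration
   satisfies [reachable_inv]: free nodes carry no edge, recruited nodes are
   linked to the leader and, with k recruited nodes, there are k + 1 free slots.
   Until spanning, k < n, at least (k+1)/2 nodes have a slot and n - k nodes are
   free, so at least (k+1)(n-k)/2 of the P unordered pairs recruit ([productive]).

   The expectation is handled by a potential function: with
   g(k) = sum_(k <= j < n) 2P/((j+1)(n-j)), one uniformly random interaction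
   lowers the average of g by at least 1 ([potential_drift]).  Writing P(T > t)
   as a count of non-spanning schedules over P^t ([survivors]), induction on the
   horizon bounds every partial sum of sum_t P(T > t) by g(1).  Partial
   fractions and H_n <= 1 + ln n finally give g(1) <= 8 n ln n for n >= 4. *)

Definition free (q : Q) : bool := if q is F then true else false.

Definition slots (q : Q) : nat :=
  match q with L0 | O0 => 2 | L1 | O1 => 1 | _ => 0 end.

Definition fill (q : Q) : Q :=
  match q with L0 => L1 | L1 => L2 | O0 => O1 | O1 => O2 | q => q end.

Lemma free_eqF q : free q -> q = F. Proof. by case: q. Qed.

Lemma slots_free q : 0 < slots q -> free q = false. Proof. by case: q. Qed.

Lemma slots_fill q : 0 < slots q -> slots (fill q) = (slots q).-1.
Proof. by case: q. Qed.

Lemma free_fill q : 0 < slots q -> free (fill q) = false.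
Proof. by case: q. Qed.

Lemma slots_le2 q : slots q <= 2 * (0 < slots q). Proof. by case: q. Qed.

Lemma delta_spec a b e r : delta a b e = Some r ->
  [/\ b = F, e = false, r = (fill a, O0, true) & 0 < slots a].
Proof. by case: a; case: b; case: e => //= -[<-]. Qed.

Lemma delta_fill a : 0 < slots a -> delta a F false = Some (fill a, O0, true).
Proof. by case: a. Qed.

Definition recruit n (c : config n) (u v : 'I_n) : config n :=
  apply_rule c u v (fill (state c u), O0, true).

Lemma state_recruit n (c : config n) u v x : state (recruit c u v) x =
  if x == u then fill (state c u) else if x == v then O0 else state c x.
Proof. by []. Qed.

Lemma edge_recruit n (c : config n) u v x y : edge (recruit c u v) x y =
  if ((x == u) && (y == v)) || ((x == v) && (y == u)) then true else edge c x y.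
Proof. by []. Qed.

Lemma step_cases n (c : config n) (p : pair_t n) :
  step c p = c \/ exists u v, [/\ u != v, free (state c v),
    0 < slots (state c u) & step c p = recruit c u v].
Proof.
have neq12 : (val p).1 != (val p).2 by rewrite neq_ltn (valP p).
rewrite /step; case E: delta => [r|].
  have [Fv _ -> Su] := delta_spec E.
  by right; exists (val p).1, (val p).2; rewrite Fv.
case E': delta => [r|]; last by left.
have [Fu _ -> Sv] := delta_spec E'.
by right; exists (val p).2, (val p).1; rewrite eq_sym Fu.
Qed.

Definition recruited n (c : config n) : nat := \sum_(x < n) ~~ free (state c x).
Definition free_count n (c : config n) : nat := \sum_(x < n) free (state c x).
Definition slot_total n (c : config n) : nat := \sum_(x < n) slots (state c x).

Lemma free_countE n (c : config n) : free_count c = n - recruited c.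
Proof.
suff : free_count c + recruited c = n by lia.
rewrite -big_split /= -[RHS]card_ord -sum1_card.
by apply: eq_bigr => x _; case: free.
Qed.

Lemma sum_two_points (T : finType) (f g : T -> nat) u v : u != v ->
  (forall x, x != u -> x != v -> f x = g x) ->
  \sum_x f x + g u + g v = \sum_x g x + f u + f v.
Proof.
move=> uv fg; have vu : v != u by rewrite eq_sym.
rewrite (bigD1 u) // (bigD1 v) /= ?vu // [\sum_x g x](bigD1 u) // (bigD1 v) /= ?vu //.
rewrite (eq_bigr g); last by move=> x /andP [] xu xv; apply: fg.
lia.
Qed.

Section Recruitment.
Variables (n : nat) (c : config n) (u v : 'I_n).
Hypotheses (uv : u != v) (Fv : free (state c v)) (Su : 0 < slots (state c u)).

Let state_recruit_other x : x != u -> x != v -> state (recruit c u v) x = state c x.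
Proof. by move=> xu xv; rewrite state_recruit (negbTE xu) (negbTE xv). Qed.

Let state_recruit_v : state (recruit c u v) v = O0.
Proof. by rewrite state_recruit eq_sym (negbTE uv) eqxx. Qed.

Lemma recruited_recruit : recruited (recruit c u v) = (recruited c).+1.
Proof.
have agree x : x != u -> x != v ->
    (~~ free (state (recruit c u v) x) : nat) = ~~ free (state c x).
  by move=> xu xv; rewrite state_recruit_other.
have := sum_two_points uv agree.
rewrite state_recruit_v state_recruit eqxx free_fill // slots_free // Fv /recruited /=.
lia.
Qed.

(* ... and one free slot: the filled slot of u is lost, v brings two. *)
Lemma slot_total_recruit : slot_total (recruit c u v) = (slot_total c).+1.
Proof.
have agree x : x != u -> x != v -> slots (state (recruit c u v) x) = slots (state c x).
  by move=> xu xv; rewrite state_recruit_other.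
have := sum_two_points uv agree.
rewrite state_recruit_v state_recruit eqxx slots_fill // (free_eqF Fv) /slot_total /=.
move: Su; lia.
Qed.

End Recruitment.

Definition reachable_inv n (l : 'I_n) (c : config n) : Prop :=
  [/\ (forall x y, free (state c x) -> edge c x y = false /\ edge c y x = false),
      (forall x, ~~ free (state c x) -> connect (fun a b => edge c a b) l x)
    & slot_total c = (recruited c).+1].

Lemma recruited_init n (l : 'I_n) : recruited (init l) = 1.
Proof. by rewrite /recruited (bigD1 l) //= eqxx big1 // => x /negbTE /= ->. Qed.

Lemma reachable_inv_init n (l : 'I_n) : reachable_inv l (init l).
Proof.
split => //= [x|]; first by case: eqP => [->|].
by rewrite recruited_init /slot_total (bigD1 l) //= eqxx big1 // => x /negbTE ->.
Qed.

(* A recruitment preserves the invariant: the new edge uv links v through u. *)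
Lemma reachable_inv_recruit n (l : 'I_n) c u v : reachable_inv l c -> u != v ->
  free (state c v) -> 0 < slots (state c u) -> reachable_inv l (recruit c u v).
Proof.
move=> [noedge linked slotsE] uv Fv Su.
have linked_more x : connect (fun a b => edge c a b) l x ->
    connect (fun a b => edge (recruit c u v) a b) l x.
  apply: connect_sub => a b ab; apply: connect1.
  by rewrite edge_recruit ab; case: ifP.
have linked_u : connect (fun a b => edge (recruit c u v) a b) l u.
  by apply/linked_more/linked; rewrite slots_free.
split.
- move=> x y; rewrite state_recruit !edge_recruit.
  case: (eqVneq x u) => [->|xu]; first by rewrite free_fill.
  case: (eqVneq x v) => [->|xv] // Fx.
  by rewrite /= !andbF; exact: noedge.
- move=> x; rewrite state_recruit.
  case: (eqVneq x u) => [-> //|xu]; case: (eqVneq x v) => [-> _|xv Rx].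
    by apply: connect_trans linked_u (connect1 _); rewrite edge_recruit !eqxx.
  exact/linked_more/linked.
- by rewrite slot_total_recruit // recruited_recruit // slotsE.
Qed.

Lemma reachable_inv_step n (l : 'I_n) c p : reachable_inv l c -> reachable_inv l (step c p).
Proof.
case: (step_cases c p) => [-> //|[u [v [uv Fv Su ->]]]] inv.
exact: reachable_inv_recruit.
Qed.

Lemma recruited_step n (c : config n) p :
  recruited (step c p) = recruited c \/ recruited (step c p) = (recruited c).+1.
Proof.
case: (step_cases c p) => [->|[u [v [uv Fv Su ->]]]]; first by left.
by right; apply: recruited_recruit.
Qed.

(* Before spanning some node is still free, since recruited nodes are linked
   to the leader. *)
Lemma nonspanning_free n (l : 'I_n) c : reachable_inv l c -> ~~ spans l c ->
  recruited c < n.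
Proof.
move=> [_ linked _] nospan.
have [x Fx] : exists x, free (state c x).
  apply/existsP; apply: contraNT nospan => /existsPn recruited_all.
  by apply/forallP => x; apply: linked.
have : 0 < free_count c by rewrite /free_count (bigD1 x) //= Fx.
by rewrite free_countE subn_gt0.
Qed.

Lemma card_set_sum (T : finType) (P : pred T) : #|[set x | P x]| = \sum_x P x.
Proof.
by rewrite -sum1_card big_mkcond /=; apply: eq_bigr => x _; rewrite inE; case: P.
Qed.

Definition cross n (A B : {set 'I_n}) (p : pair_t n) : bool :=
  ((val p).1 \in A) && ((val p).2 \in B) || ((val p).1 \in B) && ((val p).2 \in A).

Lemma card_cross n (A B : {set 'I_n}) : [disjoint A & B] ->
  #|A| * #|B| <= #|[set p | cross A B p]|.
Proof.
move=> dAB.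
pose sort2 (x : 'I_n * 'I_n) := if x.1 < x.2 then x else (x.2, x.1).
have AB_neq x : x \in finset.setX A B -> x.1 != x.2.
  case: x => a b /setXP [Aa Bb] /=; apply: contraTneq Bb => <-.
  by rewrite (disjointFr dAB Aa).
have sort2_lt x : x \in finset.setX A B -> (sort2 x).1 < (sort2 x).2.
  by move=> /AB_neq; rewrite /sort2 neq_ltn; case: ltnP.
have sort2_inj : {in finset.setX A B &, injective sort2}.
  move=> [a b] [a' b'] /setXP [/= Aa Bb] /setXP [/= Aa' Bb'].
  rewrite /sort2 /=; case: ifP; case: ifP => _ _ [e1 e2]; first by rewrite e1 e2.
  - by move: Bb'; rewrite -e1 (disjointFr dAB Aa).
  - by move: Bb; rewrite e1 (disjointFr dAB Aa').
  - by rewrite e1 e2.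
pose f x : option (pair_t n) := insub (sort2 x).
have val_f x : x \in finset.setX A B -> omap val (f x) = Some (sort2 x).
  by move=> ABx; rewrite /f (insubT (fun p : 'I_n * 'I_n => p.1 < p.2) (sort2_lt x ABx)).
have f_cross x : x \in finset.setX A B -> f x \in Some @: [set p | cross A B p].
  move=> ABx; case E: (f x) (val_f x ABx) => [p|] //= [sval_p].
  have val_p : val p = sort2 x by []; apply: imset_f.
  move: ABx; rewrite !inE /cross val_p /sort2; case: x {E sval_p val_p} => a b /andP [Aa Bb] /=.
  by case: ifP => _ /=; rewrite Aa Bb ?orbT.
have f_inj : {in finset.setX A B &, injective f}.
  move=> x y ABx ABy fxy; apply: sort2_inj => //.
  by apply: Some_inj; rewrite -val_f // fxy val_f.
rewrite -cardsX -(card_in_imset f_inj) -[X in _ <= X](card_imset _ (@Some_inj _)).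
by apply: subset_leq_card; apply/fintype.subsetP => _ /imsetP [x ABx ->]; exact: f_cross.
Qed.

Definition productive n (c : config n) : pred (pair_t n) :=
  cross [set x | 0 < slots (state c x)] [set x | free (state c x)].

(* A productive interaction does recruit, since free nodes have no edge. *)
Lemma recruited_productive n (l : 'I_n) c p : reachable_inv l c -> productive c p ->
  recruited (step c p) = (recruited c).+1.
Proof.
move=> [noedge _ _]; have neq12 : (val p).1 != (val p).2 by rewrite neq_ltn (valP p).
rewrite /productive /cross /step !inE => /orP [/andP [Su Fv]|/andP [Fu Sv]].
  rewrite (free_eqF Fv) (proj2 (noedge _ (val p).1 Fv)) delta_fill //.
  exact: recruited_recruit.
rewrite (free_eqF Fu) (proj1 (noedge _ (val p).2 Fu)) delta_fill //.
by apply: recruited_recruit; rewrite // eq_sym.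
Qed.

(* With k recruited nodes there are at least (k+1)(n-k)/2 productive pairs:
   the k+1 free slots sit on at least (k+1)/2 nodes. *)
Lemma productive_count n (l : 'I_n) c : reachable_inv l c ->
  (recruited c).+1 * (n - recruited c) <= 2 * #|[set p | productive c p]|.
Proof.
move=> [_ _ slotsE].
set A := [set x | 0 < slots (state c x)]; set B := [set x | free (state c x)].
have slots_A : (recruited c).+1 <= 2 * #|A|.
  rewrite -slotsE card_set_sum big_distrr; apply: leq_sum => x _; exact: slots_le2.
have free_B : n - recruited c = #|B| by rewrite -free_countE card_set_sum.
have dAB : [disjoint A & B].
  by apply/pred0P => x; rewrite /= !inE; case: (state c x).
rewrite free_B (leq_trans (leq_mul slots_A (leqnn _))) // -mulnA leq_mul2l.
exact: card_cross.
Qed.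

Fixpoint survivors n (l : 'I_n) (t : nat) (c : config n) : nat :=
  if spans l c then 0 else
  if t is t'.+1 then \sum_(p : pair_t n) survivors l t' (step c p) else 1.

Lemma sum_tupleS (T : finType) t (G : t.+1.-tuple T -> nat) :
  \sum_(s : t.+1.-tuple T) G s = \sum_(x : T) \sum_(s : t.-tuple T) G [tuple of x :: s].
Proof.
rewrite pair_big /= (reindex (fun xs : T * t.-tuple T => [tuple of xs.1 :: xs.2])) //=.
exists (fun s : t.+1.-tuple T => (thead s, [tuple of behead s])).
  by move=> [x s] _ /=; congr pair; apply: val_inj.
by move=> s _; apply: val_inj => /=; rewrite [s in RHS]tuple_eta.
Qed.

Lemma forall_ordS t (P : 'I_t.+2 -> bool) :
  [forall k, P k] = P ord0 && [forall k : 'I_t.+1, P (lift ord0 k)].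
Proof.
apply/forallP/andP => [H|[H0 /forallP H] k]; first by split => //; apply/forallP.
by case: (unliftP ord0 k) => [j ->|->].
Qed.

Lemma card_survivors n (l : 'I_n) t (c : config n) :
  #|[set s : t.-tuple (pair_t n) | [forall k : 'I_t.+1, ~~ spans l (run c (take k s))]]|
  = survivors l t c.
Proof.
rewrite card_set_sum; elim: t c => [|t IH] c /=.
  rewrite (eq_bigr (fun _ => (~~ spans l c : nat))); last first.
    by move=> s _; congr nat_of_bool; apply/forallP/idP => [/(_ ord0)|H k];
      rewrite ?(ord1 k) take0.
  by rewrite sum_nat_const card_tuple mul1n; case: spans.
rewrite sum_tupleS; under eq_bigr => p _ do under eq_bigr => s _ do rewrite forall_ordS.
case: (spans l c); first by rewrite big1 // => p _; rewrite big1.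
by apply: eq_bigr => p _; rewrite -IH.
Qed.

Definition npairs n : nat := #|{: pair_t n}|.

Lemma prob_T_gt_survivors (R : realType) n (l : 'I_n) t :
  prob_T_gt R l t = ((survivors l t (init l))%:R / (npairs n)%:R ^+ t)%R.
Proof. by rewrite /prob_T_gt card_survivors natrX. Qed.

Section Potential.
Local Open Scope ring_scope.
Variable R : realFieldType.

(* The potential of a configuration with k recruited nodes: the sum of
   expected-time bounds 2P/((j+1)(n-j)) for recruiting the remaining nodes. *)
Definition potential n (k : nat) : R :=
  \sum_(k <= j < n) (2 * npairs n)%:R / (j.+1 * (n - j))%:R.

Lemma potential_ge0 n k : 0 <= potential n k.
Proof. by apply: sumr_ge0 => j _; apply: divr_ge0. Qed.

Lemma potentialS n k : (k < n)%N ->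
  potential n k = (2 * npairs n)%:R / (k.+1 * (n - k))%:R + potential n k.+1.
Proof. by move=> kn; rewrite /potential big_ltn. Qed.

Lemma potential_nonincr n k : potential n k.+1 <= potential n k.
Proof.
have [kn|nk] := ltnP k n; first by rewrite [potential n k]potentialS // lerDr divr_ge0.
by rewrite /potential !big_geq // ltnW.
Qed.

(* One uniformly random interaction lowers the average potential by at least
   one: a productive pair (probability >= (k+1)(n-k)/2P) lowers it by
   2P/((k+1)(n-k)), and no interaction raises it. *)
Lemma potential_drift n (l : 'I_n) c : reachable_inv l c -> ~~ spans l c ->
  (0 < npairs n)%N ->
  \sum_(p : pair_t n) potential n (recruited (step c p))
    <= (npairs n)%:R * (potential n (recruited c) - 1).
Proof.
move=> inv nospan P_gt0.
set k := recruited c; set d : R := (2 * npairs n)%:R / (k.+1 * (n - k))%:R.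
have kn : (k < n)%N := nonspanning_free inv nospan.
have per_pair p :
    potential n (recruited (step c p)) <= potential n k - (productive c p)%:R * d.
  case prod_p: (productive c p).
    by rewrite (recruited_productive inv prod_p) (potentialS kn) -/d mul1r; lra.
  rewrite mul0r subr0; case: (recruited_step c p) => ->; first by [].
  exact: potential_nonincr.
have enough_productive : (npairs n)%:R <= (\sum_p productive c p)%:R * d.
  rewrite /d mulrA ler_pdivlMr ?ltr0n ?muln_gt0 ?subn_gt0 // -!natrM.
  rewrite ler_nat -card_set_sum; have := productive_count inv; rewrite -/k; nia.
apply: le_trans (ler_sum _ (fun p _ => per_pair p)) _.
rewrite sumrB sumr_const -mulr_suml -natr_sum -[potential n k *+ _]mulr_natl.
lra.
Qed.

(* Partial sums of P(T > t) are bounded by the potential (induction on the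
   horizon, using the drift at the first step). *)
Lemma survivors_potential n (l : 'I_n) N : (0 < npairs n)%N ->
  forall c, reachable_inv l c ->
  \sum_(t < N) (survivors l t c)%:R / (npairs n)%:R ^+ t <= potential n (recruited c).
Proof.
move=> P_gt0; elim: N => [|N IH] c inv; first by rewrite big_ord0 potential_ge0.
rewrite big_ord_recl /=; case: ifPn => [_|nospan].
  by rewrite big1 ?mul0r ?add0r ?potential_ge0 // => t _; rewrite mul0r.
set P : R := (npairs n)%:R; have P_gt0' : 0 < P by rewrite ltr0n.
set S := \sum_(p : pair_t n) \sum_(t < N) (survivors l t (step c p))%:R / P ^+ t.
have shift : \sum_(t < N) (\sum_p survivors l t (step c p))%:R / P ^+ t.+1 = P^-1 * S.
  rewrite /S exchange_big mulr_sumr; apply: eq_bigr => t _.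
  rewrite natr_sum mulr_sumr mulr_suml; apply: eq_bigr => p _.
  by rewrite exprS invfM mulrCA mulrA.
have S_le : S <= \sum_(p : pair_t n) potential n (recruited (step c p)).
  by apply: ler_sum => p _; apply/IH/reachable_inv_step.
have := le_trans S_le (potential_drift inv nospan P_gt0).
rewrite -(@ler_pM2l _ P^-1) ?invr_gt0 // mulrA mulVf ?gt_eqF // mul1r => drop.
by rewrite shift expr0 divr1; lra.
Qed.

End Potential.

Lemma npairs_le n : npairs n <= n * n.
Proof. by rewrite /npairs card_sig (leq_trans (max_card _)) // card_prod card_ord. Qed.

Lemma npairs_gt0 n : 2 <= n -> 0 < npairs n.
Proof.
move=> n2; apply/card_gt0P.
have lt01 : (0 < 1)%N by []; have n0 : 0 < n by lia.
by exists (exist (fun p : 'I_n * 'I_n => p.1 < p.2) (Ordinal n0, Ordinal n2) lt01).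
Qed.

Section HarmonicBounds.
Local Open Scope ring_scope.

(* Partial fractions: 1/((j+1)(n-j)) = (1/(j+1) + 1/(n-j)) / (n+1), and both
   halves sum to the harmonic number H_n. *)
Lemma sum_inv_products (R : realFieldType) n :
  \sum_(0 <= j < n) ((j.+1 * (n - j))%:R : R)^-1 = 2 * series harmonic n / n.+1%:R.
Proof.
have split_j j : (j < n)%N -> ((j.+1 * (n - j))%:R : R)^-1 =
    ((j.+1%:R)^-1 + ((n - j)%:R)^-1) / n.+1%:R.
  move=> jn; have sum_n : j.+1%:R + (n - j)%:R = n.+1%:R :> R.
    by rewrite -natrD; congr _%:R; lia.
  have nj_gt0 : 0 < (n - j)%:R :> R by rewrite ltr0n subn_gt0.
  have j_ge0 : 0 <= j%:R :> R by [].
  rewrite natrM -sum_n; field.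
  by rewrite !lt0r_neq0 //; lra.
rewrite (eq_big_nat _ _ (fun j jn => split_j j (proj2 (andP jn)))) -mulr_suml big_split /=.
have -> : \sum_(0 <= j < n) ((n - j)%:R : R)^-1 = series harmonic n.
  by rewrite big_nat_rev /=; apply: eq_big_nat => j /andP [_ jn]; congr (_%:R^-1); lia.
have -> : \sum_(0 <= j < n) (j.+1%:R : R)^-1 = series harmonic n by [].
by rewrite -mulr2n mulr_natl.
Qed.

Variable R : realType.

(* Comparison of 1/(j+1) with ln(j+1) - ln j, from ln (1 + x) <= x. *)
Lemma inv_le_ln_diff (j : nat) : (0 < j)%N ->
  (j.+1%:R)^-1 <= ln (j.+1%:R : R) - ln j%:R.
Proof.
move=> j_gt0; set x : R := j%:R; have x_gt0 : 0 < x by rewrite ltr0n.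
rewrite -natr1 -/x.
have gtN1 : -1 < - (x + 1)^-1 by rewrite ltrN2 invf_lt1 ?addr_gt0 //; lra.
have := le_ln1Dx gtN1.
have -> : 1 - (x + 1)^-1 = x * (x + 1)^-1 by field; lra.
by rewrite lnM ?posrE ?invr_gt0 ?addr_gt0 // lnV ?posrE ?addr_gt0 //; lra.
Qed.

(* H_n <= 1 + ln n, by telescoping the previous comparison. *)
Lemma harmonic_le_ln n : (0 < n)%N -> series (@harmonic R) n <= 1 + ln n%:R.
Proof.
move=> n_gt0; rewrite /series /= big_ltn //= invr1 lerD2l.
have -> : ln (n%:R : R) = \sum_(1 <= j < n) (ln (j.+1%:R : R) - ln j%:R).
  by rewrite (telescope_sumr (fun k => ln (k%:R : R))) // ln1 subr0.
by apply: ler_sum_nat => j /andP [j_gt0 _]; exact: inv_le_ln_diff.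
Qed.

(* ln 4 = 2 ln 2 >= 2 * (1/2), so ln n >= 1 for n >= 4. *)
Lemma ln4_ge1 : 1 <= ln (4%:R : R).
Proof.
have := inv_le_ln_diff (ltn0Sn 0); rewrite ln1 subr0.
have -> : (4%:R : R) = 2%:R * 2%:R by rewrite -natrM.
by rewrite lnM ?posrE ?ltr0n // -div1r; lra.
Qed.

(* The initial potential is at most 8 n ln n, as 2P <= 2 n^2, the sum of
   1/((j+1)(n-j)) is 2 H_n/(n+1) and H_n <= 1 + ln n <= 2 ln n. *)
Lemma potential_bound n : (4 <= n)%N -> potential R n 1 <= 8 * n%:R * ln n%:R.
Proof.
move=> n4; apply: le_trans (potential_nonincr R n 0) _.
rewrite /potential -mulr_sumr sum_inv_products natrM.
have P_le : (npairs n)%:R <= n%:R * n%:R :> R by rewrite -natrM ler_nat npairs_le.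
have H_le := harmonic_le_ln (ltn_trans (isT : 0 < 3)%N n4).
have ln_ge1 : 1 <= ln (n%:R : R).
  by apply: le_trans (ln4_ge1) _; rewrite ler_ln ?posrE ?ltr0n ?ler_nat //; lia.
have n_ge4 : 4 <= n%:R :> R by rewrite (ler_nat R 4 n).
have H_ge0 : 0 <= series (@harmonic R) n by apply: sumr_ge0 => j _; exact: harmonic_ge0.
rewrite mulrA ler_pdivrMr ?ltr0n // -natr1; nra.
Qed.

End HarmonicBounds.

Lemma nneseries_le_bound (R : realType) (u : nat -> R) (B : R) :
  (forall t, (0 <= u t)%R) -> (forall N, (\sum_(t < N) u t <= B)%R) ->
  (\sum_(0 <= t <oo) (u t)%:E <= B%:E)%E.
Proof.
move=> u_ge0 partial_le; apply: lime_le.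
  by apply: is_cvg_nneseries => t _ _; rewrite lee_fin.
by apply: nearW => N; rewrite big_mkord sumEFin lee_fin.
Qed.

Theorem theorem6 (R : realType) :
  exists (C : R) (N0 : nat), (0 < C)%R /\
    forall (n : nat) (l : 'I_n), (N0 <= n)%N ->
      (expected_time R l <= (C * n%:R * ln (n%:R : R))%R%:E)%E.
Proof.
exists 8%R, 4; split => // n l n4.
have P_gt0 : 0 < npairs n by apply: npairs_gt0; lia.
apply: nneseries_le_bound => [t|N]; first by rewrite /prob_T_gt divr_ge0.
under eq_bigr => t _ do rewrite prob_T_gt_survivors.
apply: le_trans (survivors_potential _ _ P_gt0 (reachable_inv_init l)) _.
by rewrite recruited_init potential_bound.
Qed.
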